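(* Let $u\le v$ be positive integers, $n\ge0$, $I\in\mathrm{Hilb}^n(\{x^uy^v=0\},0)$, and $J^k=I\cap(x^ky^k)$. Let $0\le k\le v-2$ and suppose each of $J^k$ and $J^{k+1}$ is of type ① or ② (as defined below), with exponent pairs $(i_k,j_k)$ and $(i_{k+1},j_{k+1})$ respectively. Then (inequalities of pairs are componentwise): (1) if both are of type ①, then either $(i_k,j_k)=(i_{k+1},j_{k+1})$ or $(i_k,j_k)\ge(i_{k+1}+1,j_{k+1}+1)$; (2) if both are of type ②, then $(i_k,j_k)\ge(i_{k+1}+1,j_{k+1}+1)$; (3) if $J^k$ is of type ① and $J^{k+1}$ of type ②, then $(i_k,j_k)\ge(i_{k+1},j_{k+1})$; (4) if $J^k$ is of type ② and $J^{k+1}$ of type ①, then $(i_k,j_k)\ge(i_{k+1}+1,j_{k+1}+1)$.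
   Context: $\mathrm{Hilb}^n(\{x^uy^v=0\},0)$ is the set of ideals $I\subset\mathbb{C}[[x,y]]$ with $\dim_{\mathbb{C}}\mathbb{C}[[x,y]]/I=n$, supported at the origin, with $x^uy^v\in I$. For $0\le k\le v-1$: $J^k$ is of type ① with exponent pair $(i,j)$ if there are $a,b\in\mathbb{C}\setminus\{0\}$, integers $i,j\ge1$ and $h\in\mathbb{C}[[x,y]]$ such that $E=x^ky^k(ax^{i}+by^{j})+x^{k+1}y^{k+1}h\in J^k$ and $J^k=J^{k+1}+(E)$; $J^k$ is of type ② with exponent pair $(i,j)$ if there are integers $i,j\ge1$ and $h_1,h_2\in\mathbb{C}[[x,y]]$ such that $E_1=x^ky^kx^{i}+x^{k+1}y^{k+1}h_1$ and $E_2=x^ky^ky^{j}+x^{k+1}y^{k+1}h_2$ lie in $J^k$ and $J^k=J^{k+1}+(E_1,E_2)$, while $J^k$ is not of type ①. *)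

From Stdlib Require Import Reals.
From mathcomp Require Import all_boot all_algebra.
From mathcomp Require Import Rstruct complex.

Set Implicit Arguments.
Unset Strict Implicit.
Unset Printing Implicit Defensive.

Import GRing.Theory.
Local Open Scope ring_scope.

Definition CC : fieldType := (R[i])%C.

(* A formal power series f in C[[x,y]] is given by its coefficients:
   f a b is the coefficient of x^a y^b. *)
Definition ps := nat -> nat -> CC.

Definition ps_add (f g : ps) : ps := fun a b => f a b + g a b.
Definition ps_scale (c : CC) (f : ps) : ps := fun a b => c * f a b.
Definition ps_mul (f g : ps) : ps :=
  fun a b => \sum_(p < a.+1) \sum_(q < b.+1) f p q * g (a - p)%N (b - q)%N.
Definition mono (i j : nat) : ps :=
  fun a b => if (a == i) && (b == j) then 1 else 0.

Definition psset := ps -> Prop.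

Definition is_ideal (I : psset) : Prop :=
  [/\ I (fun _ _ => 0),
      (forall f g, I f -> I g -> I (ps_add f g)) &
      (forall h f, I f -> I (ps_mul h f))].

(* dim_C C[[x,y]]/I = n : there are n series whose classes form a
   C-basis of the quotient. *)
Definition lincomb (n : nat) (c : 'I_n -> CC) (B : 'I_n -> ps) : ps :=
  fun a b => \sum_(i < n) c i * B i a b.

Definition ps_sub (f g : ps) : ps := fun a b => f a b - g a b.

Definition quot_dim (I : psset) (n : nat) : Prop :=
  exists B : 'I_n -> ps,
    (forall f, exists c : 'I_n -> CC, I (ps_sub f (lincomb c B))) /\
    (forall c : 'I_n -> CC, I (lincomb c B) -> forall i, c i = 0).

(* I is supported at the origin: it contains a power of the maximal
   ideal (x,y), i.e. all monomials of large enough total degree. *)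
Definition supported_at_origin (I : psset) : Prop :=
  exists N : nat, forall a b, (N <= a + b)%N -> I (mono a b).

Definition in_Hilb (n u v : nat) (I : psset) : Prop :=
  [/\ is_ideal I, quot_dim I n, supported_at_origin I & I (mono u v)].

Definition Jk (I : psset) (k : nat) : psset :=
  fun f => I f /\ exists h, f = ps_mul (mono k k) h.

Definition eq_plus1 (J J' : psset) (E : ps) : Prop :=
  forall f, J f <-> exists g h, J' g /\ f = ps_add g (ps_mul h E).
Definition eq_plus2 (J J' : psset) (E1 E2 : ps) : Prop :=
  forall f, J f <-> exists g h1 h2,
      J' g /\ f = ps_add g (ps_add (ps_mul h1 E1) (ps_mul h2 E2)).

Definition type1 (I : psset) (k i j : nat) : Prop :=
  (1 <= i)%N /\ (1 <= j)%N /\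
  exists (a b : CC) (h : ps), a != 0 /\ b != 0 /\
    let E := ps_add (ps_mul (mono k k)
                       (ps_add (ps_scale a (mono i 0)) (ps_scale b (mono 0 j))))
                    (ps_mul (mono k.+1 k.+1) h) in
    Jk I k E /\ eq_plus1 (Jk I k) (Jk I k.+1) E.

Definition type2 (I : psset) (k i j : nat) : Prop :=
  [/\ (1 <= i)%N, (1 <= j)%N,
    (exists h1 h2 : ps,
      let E1 := ps_add (ps_mul (mono k k) (mono i 0)) (ps_mul (mono k.+1 k.+1) h1) in
      let E2 := ps_add (ps_mul (mono k k) (mono 0 j)) (ps_mul (mono k.+1 k.+1) h2) in
      [/\ Jk I k E1, Jk I k E2 & eq_plus2 (Jk I k) (Jk I k.+1) E1 E2]) &
    ~ (exists i' j', type1 I k i' j')].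

(** The x-trace of a series F at level s is the sequence of coefficients of
    x^(s+m) y^s in F, i.e. of (F / x^s y^s)(x, 0); the y-trace is defined
    symmetrically.  Elements of J^(s+1) have zero traces at level s, so if
    J^s = J^(s+1) + (E) (type 1) every element H E + g of J^s has x-trace
    H(x, 0) * a x^i and y-trace H(0, y) * b y^j: both are divisible by the
    respective powers, and their leading coefficients vanish together with
    H(0, 0).  Type 2 gives the same divisibility.  Now the level-k generators
    produce elements of J^(k+1) with known traces: x y E has traces a x^i and
    b y^j, while y E1 and x E2 have traces x^(i-1) and y^(j-1).  Comparing
    with the divisibility at level k+1 yields the four inequalities. *)
From mathcomp Require Import all_boot all_algebra zify.
From Stdlib Require Import FunctionalExtensionality.

Set Implicit Arguments.
Unset Strict Implicit.
Unset Printing Implicit Defensive.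

Import GRing.Theory.
Local Open Scope ring_scope.

Section CauchyProduct.

Variable R : pzSemiRingType.

Definition vanishes_below (i : nat) (f : nat -> R) : Prop :=
  forall m, (m < i)%N -> f m = 0.

Definition cauchy (f g : nat -> R) (m : nat) : R :=
  \sum_(p < m.+1) f p * g (m - p)%N.

Lemma vanishes_belowD i f g :
  vanishes_below i f -> vanishes_below i g -> vanishes_below i (f \+ g).
Proof. by move=> f0 g0 m lt_mi; rewrite /= f0 ?g0 ?addr0. Qed.

Lemma vanishes_below_leq i f m : vanishes_below i f -> f m != 0 -> (i <= m)%N.
Proof. by move=> f0; apply: contraR; rewrite -ltnNge => /f0 ->. Qed.

Lemma vanishes_below_support i f :
  (forall m, (f m != 0) = (m == i)) -> vanishes_below i f.
Proof. by move=> f_supp m /ltn_eqF; rewrite -f_supp => /negbFE/eqP. Qed.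

Lemma cauchy_vanishes_below f g i :
  vanishes_below i g -> vanishes_below i (cauchy f g).
Proof.
move=> g0 m lt_mi; apply: big1 => p _.
by rewrite g0 ?mulr0 // (leq_ltn_trans (leq_subr p m)).
Qed.

Lemma cauchy_lead f g i : vanishes_below i g -> cauchy f g i = f 0%N * g i.
Proof.
move=> g0; rewrite /cauchy big_ord_recl subn0 big1 ?addr0 // => p _.
by rewrite g0 ?mulr0 // lift0; have := ltn_ord p; lia.
Qed.

End CauchyProduct.

Lemma mul_monoE a b h p q : ps_mul (mono a b) h p q =
  if (a <= p)%N && (b <= q)%N then h (p - a)%N (q - b)%N else 0.
Proof.
transitivity (\sum_(p' < p.+1 | p' == a :> nat)
                \sum_(q' < q.+1 | q' == b :> nat) h (p - p')%N (q - q')%N).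
  rewrite big_mkcond; apply: eq_bigr => p' _; rewrite /mono.
  case: eqVneq => _; last by rewrite big1 // => q' _; rewrite andFb mul0r.
  rewrite [RHS]big_mkcond; apply: eq_bigr => q' _.
  by rewrite andTb; case: eqVneq; rewrite ?mul1r ?mul0r.
rewrite (big_ord1_eq _ (fun p' =>
  \sum_(q' < q.+1 | q' == b :> nat) h (p - p')%N (q - q')%N)) ltnS.
by case: leqP => // _; rewrite (big_ord1_eq _ (fun q' => h (p - a)%N (q - q')%N)) ltnS.
Qed.

Lemma mul_mono_shift c d F p q : ps_mul (mono c d) F (c + p) (d + q) = F p q.
Proof. by rewrite mul_monoE !leq_addr !addKn. Qed.

Lemma mono_eq0 a b p q : (mono a b p q == 0) = ~~ ((p == a) && (q == b)).
Proof. by rewrite /mono; case: (_ && _); rewrite ?oner_eq0 ?eqxx. Qed.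

Definition mono_dvd (a b : nat) (F : ps) : Prop :=
  forall p q, (p < a)%N || (q < b)%N -> F p q = 0.

Lemma mono_dvd_mono a b : mono_dvd a b (mono a b).
Proof.
move=> p q lt_pq; apply/eqP; rewrite mono_eq0 negb_and.
by case/orP: lt_pq => /ltn_eqF ->; rewrite ?orbT.
Qed.

Lemma mono_dvdW a b a' b' F : (a' <= a)%N -> (b' <= b)%N ->
  mono_dvd a b F -> mono_dvd a' b' F.
Proof. by move=> le_a le_b dvdF p q lt_pq; apply: dvdF; lia. Qed.

Lemma mono_dvd_mul a b c d F :
  mono_dvd a b F -> mono_dvd (c + a) (d + b) (ps_mul (mono c d) F).
Proof.
move=> dvdF p q lt_pq; rewrite mul_monoE; case: ifP => // /andP[le_cp le_dq].
by apply: dvdF; lia.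
Qed.

Lemma mono_dvd_add a b F G :
  mono_dvd a b F -> mono_dvd a b G -> mono_dvd a b (ps_add F G).
Proof. by move=> dvdF dvdG p q lt_pq; rewrite /ps_add dvdF ?dvdG ?addr0. Qed.

Lemma mono_dvdP s F : (exists h, F = ps_mul (mono s s) h) <-> mono_dvd s s F.
Proof.
split=> [[h ->] p q lt_pq | dvdF].
  by rewrite mul_monoE; case: ifP => // /andP[]; lia.
exists (fun p q => F (s + p)%N (s + q)%N).
do 2 apply: functional_extensionality => ?; rewrite mul_monoE.
case: ifP => [/andP[le_sp le_sq] | /negbT not_le]; first by rewrite !subnKC.
by apply: dvdF; lia.
Qed.

Definition ps_swap (F : ps) : ps := fun p q => F q p.

Lemma ps_swap_mul F G : ps_swap (ps_mul F G) = ps_mul (ps_swap F) (ps_swap G).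
Proof.
by do 2 apply: functional_extensionality => ?; rewrite /ps_swap /ps_mul exchange_big.
Qed.

Lemma mono_dvd_swap a b F : mono_dvd a b F -> mono_dvd b a (ps_swap F).
Proof. by move=> dvdF p q; rewrite orbC; apply: dvdF. Qed.

Definition level_gen (s : nat) (X h : ps) : ps :=
  ps_add (ps_mul (mono s s) X) (ps_mul (mono s.+1 s.+1) h).

Lemma level_gen_dvd s a b X h : (a <= 1)%N -> (b <= 1)%N ->
  mono_dvd a b X -> mono_dvd (s + a) (s + b) (level_gen s X h).
Proof.
move=> le_a1 le_b1 dvdX; apply: mono_dvd_add; first exact: mono_dvd_mul.
by move=> p q lt_pq; rewrite mul_monoE; case: ifP => // /andP[]; lia.
Qed.

Lemma level_gen_dvd_diag s X h : mono_dvd s s (level_gen s X h).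
Proof.
by have := @level_gen_dvd s 0 0 X h; rewrite !addn0; apply=> // p q; rewrite !ltn0.
Qed.

Definition xtrace (s : nat) (F : ps) : nat -> CC := fun m => F (s + m)%N s.
Definition ytrace (s : nat) (F : ps) : nat -> CC := xtrace s (ps_swap F).

Lemma xtraceD s F G : xtrace s (ps_add F G) = xtrace s F \+ xtrace s G.
Proof. by []. Qed.

Lemma ytraceD s F G : ytrace s (ps_add F G) = ytrace s F \+ ytrace s G.
Proof. by []. Qed.

Lemma xtrace_mul s H F : mono_dvd s s F ->
  xtrace s (ps_mul H F) = cauchy (fun p => H p 0%N) (xtrace s F).
Proof.
move=> dvdF; apply: functional_extensionality => m.
transitivity (\sum_(p < (s + m).+1) H p 0%N * F (s + m - p)%N s).
  apply: eq_bigr => p _; rewrite big_ord_recl subn0 big1 ?addr0 // => q _.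
  by rewrite dvdF ?mulr0 // lift0; have := ltn_ord q; lia.
rewrite /cauchy (big_ord_widen (s + m).+1 (fun p => H p 0%N * xtrace s F (m - p)))
  ?ltnS ?leq_addl // [RHS]big_mkcond.
apply: eq_bigr => p _; case: ltnP => [le_pm | lt_mp]; first by rewrite /xtrace addnBA.
by rewrite dvdF ?mulr0 //; have := ltn_ord p; lia.
Qed.

Lemma ytrace_mul s H F : mono_dvd s s F ->
  ytrace s (ps_mul H F) = cauchy (fun q => H 0%N q) (ytrace s F).
Proof. by move=> dvdF; rewrite /ytrace ps_swap_mul xtrace_mul //; apply: mono_dvd_swap. Qed.

Lemma xtrace_add_dvd_succ s g G :
  mono_dvd s.+1 s.+1 g -> xtrace s (ps_add g G) = xtrace s G.
Proof.
move=> dvd_g; apply: functional_extensionality => m.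
by rewrite /xtrace /ps_add dvd_g ?add0r // ltnSn orbT.
Qed.

Lemma ytrace_add_dvd_succ s g G :
  mono_dvd s.+1 s.+1 g -> ytrace s (ps_add g G) = ytrace s G.
Proof. by move/mono_dvd_swap; apply: xtrace_add_dvd_succ. Qed.

Lemma xtrace_level_gen s X h : xtrace s (level_gen s X h) = fun m => X m 0%N.
Proof.
apply: functional_extensionality => m; rewrite /xtrace /level_gen /ps_add.
by rewrite !mul_monoE leq_addr leqnn ltnn andbF addKn subnn addr0.
Qed.

Lemma ytrace_level_gen s X h : ytrace s (level_gen s X h) = fun m => X 0%N m.
Proof.
apply: functional_extensionality => m; rewrite /ytrace /xtrace /ps_swap /level_gen /ps_add.
by rewrite !mul_monoE leq_addr leqnn ltnn andFb addKn subnn addr0.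
Qed.

Lemma xtrace_mul_xy s F m : xtrace s.+1 (ps_mul (mono 1 1) F) m = xtrace s F m.
Proof. exact: (mul_mono_shift 1 1 F (s + m) s). Qed.

Lemma ytrace_mul_xy s F m : ytrace s.+1 (ps_mul (mono 1 1) F) m = ytrace s F m.
Proof. exact: (mul_mono_shift 1 1 F s (s + m)). Qed.

Lemma xtrace_mul_y s F m : xtrace s.+1 (ps_mul (mono 0 1) F) m = xtrace s F m.+1.
Proof. by rewrite /xtrace addSnnS; apply: (mul_mono_shift 0 1 F (s + m.+1) s). Qed.

Lemma ytrace_mul_x s F m : ytrace s.+1 (ps_mul (mono 1 0) F) m = ytrace s F m.+1.
Proof. by rewrite /ytrace /xtrace /ps_swap addSnnS; apply: (mul_mono_shift 1 0 F s). Qed.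

Lemma binomial_row a b i j m : a != 0 -> (0 < j)%N ->
  (ps_add (ps_scale a (mono i 0)) (ps_scale b (mono 0 j)) m 0%N != 0) = (m == i).
Proof.
move=> a0 j_gt0; rewrite /ps_add /ps_scale.
have /eqP -> : mono 0 j m 0 == 0 by rewrite mono_eq0 (ltn_eqF j_gt0) andbF.
by rewrite mulr0 addr0 mulf_eq0 negb_or a0 mono_eq0 negbK andbT.
Qed.

Lemma binomial_col a b i j m : b != 0 -> (0 < i)%N ->
  (ps_add (ps_scale a (mono i 0)) (ps_scale b (mono 0 j)) 0%N m != 0) = (m == j).
Proof.
move=> b0 i_gt0; rewrite /ps_add /ps_scale.
have /eqP -> : mono i 0 0 m == 0 by rewrite mono_eq0 (ltn_eqF i_gt0).
by rewrite mulr0 add0r mulf_eq0 negb_or b0 mono_eq0 negbK eqxx.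
Qed.

Definition traces_vanish_below (I : psset) (s i j : nat) : Prop :=
  forall F, Jk I s F -> vanishes_below i (xtrace s F) /\ vanishes_below j (ytrace s F).

Lemma type1_traces I s i j : type1 I s i j ->
  traces_vanish_below I s i j /\
  forall F, Jk I s F -> (xtrace s F i == 0) = (ytrace s F j == 0).
Proof.
case=> i_gt0 [j_gt0 [a [b [h [a0 [b0 [_ eqJ]]]]]]].
have x_row m := binomial_row b i m a0 j_gt0.
have y_col m := binomial_col a j m b0 i_gt0.
set X := ps_add (ps_scale a _) _ in eqJ x_row y_col.
have vx := vanishes_below_support x_row; have vy := vanishes_below_support y_col.
have /negbTE xi : X i 0%N != 0 by rewrite x_row.
have /negbTE yj : X 0%N j != 0 by rewrite y_col.
suff traces F : Jk I s F -> exists H : ps,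
    xtrace s F = cauchy (fun p => H p 0%N) (fun m => X m 0%N) /\
    ytrace s F = cauchy (fun q => H 0%N q) (fun m => X 0%N m).
  split=> F /traces [H [-> ->]]; first by split; apply: cauchy_vanishes_below.
  by rewrite (cauchy_lead _ vx) (cauchy_lead _ vy) !mulf_eq0 xi yj.
case/eqJ=> g [H [[_ /mono_dvdP dvd_g] ->]]; exists H.
rewrite xtrace_add_dvd_succ // ytrace_add_dvd_succ // -/(level_gen s X h).
by rewrite xtrace_mul ?ytrace_mul ?xtrace_level_gen ?ytrace_level_gen //;
  apply: level_gen_dvd_diag.
Qed.

Lemma type2_traces I s i j : type2 I s i j -> traces_vanish_below I s i j.
Proof.
case=> i_gt0 j_gt0 [h1 [h2 [_ _ eqJ]]] _ F.
case/eqJ=> g [H1 [H2 [[_ /mono_dvdP dvd_g] ->]]].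
rewrite xtrace_add_dvd_succ // ytrace_add_dvd_succ // xtraceD ytraceD.
rewrite -/(level_gen s (mono i 0) h1) -/(level_gen s (mono 0 j) h2).
rewrite !xtrace_mul ?ytrace_mul ?xtrace_level_gen ?ytrace_level_gen;
  try exact: level_gen_dvd_diag.
split; apply: vanishes_belowD; apply: cauchy_vanishes_below => m lt_m;
  apply/eqP; rewrite mono_eq0 ?(ltn_eqF lt_m) ?(ltn_eqF i_gt0) ?(ltn_eqF j_gt0) ?andbF //.
Qed.

Lemma type1_lift I k i j : is_ideal I -> type1 I k i j ->
  exists2 F, Jk I k.+1 F &
    (forall m, (xtrace k.+1 F m != 0) = (m == i)) /\
    (forall m, (ytrace k.+1 F m != 0) = (m == j)).
Proof.
move=> [_ _ idealM] [i_gt0 [j_gt0 [a [b [h [a0 [b0 [[IE _] _]]]]]]]].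
rewrite -/(level_gen k _ h) in IE; set E := level_gen k _ h in IE.
exists (ps_mul (mono 1 1) E).
  split; first exact: idealM.
  apply/mono_dvdP; apply: (mono_dvd_mul (c:=1) (d:=1)); exact: level_gen_dvd_diag.
split=> m; rewrite ?xtrace_mul_xy ?ytrace_mul_xy ?xtrace_level_gen ?ytrace_level_gen.
  exact: binomial_row.
exact: binomial_col.
Qed.

Lemma type2_lift I k i j : is_ideal I -> type2 I k i j ->
  (exists2 F, Jk I k.+1 F & xtrace k.+1 F i.-1 != 0) /\
  (exists2 F, Jk I k.+1 F & ytrace k.+1 F j.-1 != 0).
Proof.
move=> [_ _ idealM] [i_gt0 j_gt0 [h1 [h2 [[IE1 _] [IE2 _] _]]] _].
split.
  exists (ps_mul (mono 0 1) (level_gen k (mono i 0) h1)).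
    split; first exact: idealM.
    have := mono_dvd_mul (c:=0) (d:=1) (level_gen_dvd (s:=k) h1 (leqnn 1) (leq0n 1)
              (mono_dvdW i_gt0 (leqnn 0) (@mono_dvd_mono i 0))).
    by rewrite add0n addn1 addn0 add1n => /mono_dvdP.
  by rewrite xtrace_mul_y prednK // xtrace_level_gen mono_eq0 negbK !eqxx.
exists (ps_mul (mono 1 0) (level_gen k (mono 0 j) h2)).
  split; first exact: idealM.
  have := mono_dvd_mul (c:=1) (d:=0) (level_gen_dvd (s:=k) h2 (leq0n 1) (leqnn 1)
            (mono_dvdW (leqnn 0) j_gt0 (@mono_dvd_mono 0 j))).
  by rewrite add0n addn1 addn0 add1n => /mono_dvdP.
by rewrite ytrace_mul_x prednK // ytrace_level_gen mono_eq0 negbK !eqxx.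
Qed.

Lemma type2_lift_lt I k i j i' j' : is_ideal I -> type2 I k i j ->
  traces_vanish_below I k.+1 i' j' -> (i' < i)%N /\ (j' < j)%N.
Proof.
move=> idealI T2 van; have [i_gt0 j_gt0 _ _] := T2.
have [[F1 JF1 F1x] [F2 JF2 F2y]] := type2_lift idealI T2.
have := vanishes_below_leq (van F1 JF1).1 F1x.
have := vanishes_below_leq (van F2 JF2).2 F2y.
lia.
Qed.

Theorem mainTheorem8 (u v n : nat) (I : psset) (k ik jk ik1 jk1 : nat) :
  (0 < u)%N -> (u <= v)%N -> in_Hilb n u v I -> (k + 2 <= v)%N ->
  [/\ (type1 I k ik jk -> type1 I k.+1 ik1 jk1 ->
         (ik = ik1 /\ jk = jk1) \/ (ik1 < ik /\ jk1 < jk))%N,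
      (type2 I k ik jk -> type2 I k.+1 ik1 jk1 -> ik1 < ik /\ jk1 < jk)%N,
      (type1 I k ik jk -> type2 I k.+1 ik1 jk1 -> ik1 <= ik /\ jk1 <= jk)%N &
      (type2 I k ik jk -> type1 I k.+1 ik1 jk1 -> ik1 < ik /\ jk1 < jk)%N].
Proof.
move=> _ _ [idealI _ _ _] _; split=> [T1 T1' | T2 T2' | T1 T2' | T2 T1'].
- have [F JF [Fx Fy]] := type1_lift idealI T1.
  have [/(_ F JF) [vx vy] lead] := type1_traces T1'.
  have le_i : (ik1 <= ik)%N by apply: (vanishes_below_leq vx); rewrite Fx.
  have le_j : (jk1 <= jk)%N by apply: (vanishes_below_leq vy); rewrite Fy.
  have : (ik1 == ik) = (jk1 == jk) by rewrite -Fx -Fy (lead F JF).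
  by case: eqP => [-> /esym/eqP -> | /eqP ne_i /esym/negbT ne_j]; [left | right; lia].
- exact: type2_lift_lt idealI T2 (type2_traces T2').
- have [F JF [Fx Fy]] := type1_lift idealI T1.
  have [vx vy] := type2_traces T2' JF.
  by split; [apply: (vanishes_below_leq vx) | apply: (vanishes_below_leq vy)];
    rewrite ?Fx ?Fy.
- exact: type2_lift_lt idealI T2 (type1_traces T1').1.
Qed.
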